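(* Let $\mathcal E\subset\mathcal L^n$ contain all balls and let $\diamond:\mathcal E\to\mathcal L^n$ be sequentially approximable on $\mathcal E$ by polarizations. Then there is a hyperplane $H$ such that for each ball $B$ in $\mathbb{R}^n$, $\diamond B=\diamond B^\dagger$ up to a null set, where $B^\dagger$ is the reflection of $B$ in $H$. Consequently, translations, Brock set maps with parameter $b\in(0,1]$, and Solynin set maps (with respect to arbitrary hyperplanes) are not sequentially approximable on $\mathcal E$ by polarizations.
   Context: $\mathcal L^n$: measurable subsets of $\mathbb{R}^n$ of finite measure. Set polarization with respect to an oriented hyperplane $H$ (closed halfspaces $H^\pm$, reflection $A^\dagger$): $(P_HA)\cap H^+=(A\cup A^\dagger)\cap H^+$, $(P_HA)\cap H^-=(A\cap A^\dagger)\cap H^-$. $\diamond$ is sequentially approximable on $\mathcal E$ by polarizations if there are polarizations $\diamond_k$ with $\|1_{(\diamond_k\circ\cdots\circ\diamond_1)A}-1_{\diamond A}\|_1\to0$ for all $A\in\mathcal E$. The Brock set map with parameter $b$ relative to $H_0=u^\perp+t_0u$ maps each ball $B(x,r)$ to $B(x+(b-1)(\langle x,u\rangle-t_0)u,r)$ (up to null sets). The Solynin set map relative to an oriented hyperplane $H_0$ acts on each line orthogonal to $H_0$, identified with $\mathbb{R}$ with $H_0$ corresponding to $t$, by $A\mapsto[t-r_A,t+r_A]\cup(A\cap[t,\infty))$ with $r_A\ge0$ chosen to preserve measure; in particular it fixes balls in $H_0^+$ and maps balls with center in the open negative side to balls centered in $H_0$. *)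

From HB Require Import structures.
From mathcomp Require Import all_boot all_order all_algebra.
From mathcomp Require Import all_classical all_reals all_analysis.
Set Implicit Arguments. Unset Strict Implicit. Unset Printing Implicit Defensive.
Import Order.TTheory GRing.Theory Num.Theory.
Local Open Scope classical_set_scope.
Local Open Scope ring_scope.

Section Defs.
Variables (R : realType) (n : nat).
Local Notation V := 'rV[R]_n.

Definition dotv (x y : V) : R := \sum_(i < n) x ord0 i * y ord0 i.

Definition cball (x : V) (r : R) : set V := [set y | dotv (y - x) (y - x) <= r ^+ 2].

Definition box (a b : V) : set V := [set y | forall i, a ord0 i <= y ord0 i <= b ord0 i].
Definition boxvol (a b : V) : R := \prod_(i < n) Num.max 0 (b ord0 i - a ord0 i).

Definition lebo (A : set V) : \bar R :=
  ereal_inf [set s | exists a b : nat -> V,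
     A `<=` \bigcup_k box (a k) (b k) /\
     s = (\sum_(k <oo) (boxvol (a k) (b k))%:E)%E].

Definition Lmeas (A : set V) : Prop := lebo.-caratheodory A.
Definition Ln (A : set V) : Prop := Lmeas A /\ (lebo A < +oo)%E.

Definition symdiff (A B : set V) : set V := (A `\` B) `|` (B `\` A).

(** ||1_A - 1_B||_1 = lambda^n (A symdiff B) *)
Definition L1dist (A B : set V) : \bar R := lebo (symdiff A B).

Definition null_equiv (A B : set V) : Prop := lebo (symdiff A B) = 0%E.

(** oriented hyperplanes H = u^perp + t u, |u| = 1, H^+ = {<x,u> >= t} *)
Definition ohyp : Type := (V * R)%type.
Definition is_ohyp (H : ohyp) : Prop := dotv H.1 H.1 = 1.
Definition hplus (H : ohyp) : set V := [set x | H.2 <= dotv x H.1].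
Definition hminus (H : ohyp) : set V := [set x | dotv x H.1 <= H.2].
Definition reflpt (H : ohyp) (x : V) : V := x - (2 * (dotv x H.1 - H.2)) *: H.1.
Definition reflset (H : ohyp) (A : set V) : set V := [set x | A (reflpt H x)].

Definition polarize (H : ohyp) (A : set V) : set V :=
  ((A `|` reflset H A) `&` hplus H) `|` ((A `&` reflset H A) `&` hminus H).

(** (P_{H_k} o ... o P_{H_1}) A, with H_{j+1} := hs j *)
Fixpoint polcomp (hs : nat -> ohyp) (k : nat) (A : set V) : set V :=
  match k with
  | 0 => A
  | k'.+1 => polarize (hs k') (polcomp hs k' A)
  end.

Definition seq_approx (E : set (set V)) (dm : set V -> set V) : Prop :=
  exists hs : nat -> ohyp, (forall k, is_ohyp (hs k)) /\
    forall A, E A -> (fun k => L1dist (polcomp hs k A) (dm A)) @ \oo --> 0%E.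

Definition translate (v : V) (A : set V) : set V := [set x | A (x - v)].

Definition brock_map (b : R) (H0 : ohyp) (dm : set V -> set V) : Prop :=
  forall (x : V) (r : R), 0 < r ->
    null_equiv (dm (cball x r)) (cball (x + ((b - 1) * (dotv x H0.1 - H0.2)) *: H0.1) r).

(** Solynin set map relative to H0 = (u, t): on the line w + R u (w orthogonal
    to u), identified with R via s |-> w + s u (so H0 is s = t), the slice
    A_w is mapped to [t - r, t + r] `|` (A_w `&` [t, oo)) with r >= 0 chosen
    so that the one-dimensional Lebesgue measure is preserved. *)
Definition line_slice (H0 : ohyp) (A : set V) (w : V) : set R :=
  [set s | A (w + s *: H0.1)].
Definition solynin_radius (H0 : ohyp) (A : set V) (w : V) : R :=
  inf [set r : R | 0 <= r /\
    lebesgue_measure (`[H0.2 - r, H0.2 + r]%classic `|`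
                      (line_slice H0 A w `&` `[H0.2, +oo[%classic))
    = lebesgue_measure (line_slice H0 A w)].
Definition solynin (H0 : ohyp) (A : set V) : set V :=
  [set z | let s := dotv z H0.1 in let w := z - s *: H0.1 in
     (H0.2 - solynin_radius H0 A w <= s <= H0.2 + solynin_radius H0 A w)
     \/ (H0.2 <= s /\ A z)].

End Defs.

(* Polarization in a hyperplane H cannot tell a set from its reflection in H:
   P_H (reflset H A) = P_H A.  Taking H to be the first hyperplane of an approximating
   sequence, the iterated polarizations of a ball B and of its reflection B' agree from
   the first step on, so by the triangle inequality for the symmetric-difference measure
   the limits dm B and dm B' coincide up to a null set.  Translations, Brock maps and
   Solynin maps violate this on suitable unit balls: one image contains a small cube that
   the other misses, and small cubes have positive outer measure (a cover of a box by
   boxes has total volume at least that of the box, by integrating along one coordinate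
   and inducting on the dimension). *)

From HB Require Import structures.
From mathcomp Require Import all_boot all_order all_algebra.
From mathcomp Require Import all_classical all_reals all_analysis.
From mathcomp Require Import measurable_realfun ring lra.
Import Order.TTheory GRing.Theory Num.Theory.
Local Open Scope classical_set_scope.
Local Open Scope ring_scope.

Section Interval.
Context {R : realType}.

Lemma lebesgue_measure_itv_cc (a b : R) :
  (lebesgue_measure (`[a, b]%classic : set R) = (Num.max 0 (b - a))%:E)%E.
Proof.
rewrite lebesgue_measure_itv /=; case: ltP => [ab|].
  by rewrite -EFinD (max_idPr _) // subr_ge0 ltW.
by rewrite lee_fin => ba; rewrite (max_idPl _) // subr_le0.
Qed.

(* No measurability is needed: [lebesgue_measure] is an outer measure on all of [set R]. *)
Lemma le_lebesgue_measure {A B : set R} : A `<=` B ->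
  (lebesgue_measure A <= lebesgue_measure B)%E.
Proof.
move=> AB; rewrite /lebesgue_measure /lebesgue_stieltjes_measure /measure_extension.
exact: le_outer_measure.
Qed.

(* Integrate the pointwise bound over [al, be] and interchange sum and integral. *)
Lemma interval_cover_le {al be m : R} {a b c : nat -> R} :
  al <= be -> 0 <= m -> (forall k, 0 <= c k) ->
  (forall x, al <= x <= be ->
     (m%:E <= \sum_(k <oo) (c k * \1_(`[a k, b k]%classic) x)%:E)%E) ->
  ((m * (be - al))%:E <= \sum_(k <oo) (c k * Num.max 0 (b k - a k))%:E)%E.
Proof.
move=> albe m0 c0 cover.
pose D : set R := `[al, be]%classic.
have mD : measurable D by exact: measurable_itv.
pose f k x := c k * \1_(`[a k, b k]%classic) x.
have f0 k x : (0 <= (f k x)%:E)%E by rewrite lee_fin mulr_ge0.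
have mf k : measurable_fun D (fun x : R => ((f k x)%:E : \bar R)).
  by apply/measurable_EFinP/measurable_funM; [exact: measurable_cst|exact: measurable_indic].
apply: (@le_trans _ _ (\int[lebesgue_measure]_(x in D) m%:E)%E).
  rewrite integral_cst //.
  set lenD := (X in (_ * X)%E).
  have -> : lenD = (Num.max 0 (be - al))%:E by exact: lebesgue_measure_itv_cc.
  by rewrite -EFinM lee_fin (max_idPr _) ?subr_ge0.
apply: (@le_trans _ _ (\int[lebesgue_measure]_(x in D) \sum_(k <oo) (f k x)%:E)%E).
  apply: ge0_le_integral => //.
  by apply: ge0_emeasurable_sum => // k _; exact: mf.
rewrite integral_nneseries //.
apply: lee_nneseries => [k _ _|k _]; first exact: integral_ge0.
rewrite /f; under eq_integral do rewrite EFinM.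
rewrite ge0_integralZl_EFin //; last by apply/measurable_EFinP; exact: measurable_indic.
rewrite integral_indic // EFinM lee_wpmul2l ?lee_fin //.
rewrite -lebesgue_measure_itv_cc; apply: le_lebesgue_measure; exact: subIsetl.
Qed.

End Interval.

Section HeadTail.
Context {R : realType} {n : nat}.
Local Notation V := 'rV[R]_n.+1.

Definition row_head (x : V) : R := x ord0 ord0.
Definition row_tail (x : V) : 'rV[R]_n := \row_(j < n) x ord0 (lift ord0 j).
Definition row_cons (x1 : R) (y : 'rV[R]_n) : V :=
  \row_(i < n.+1) if unlift ord0 i is Some j then y ord0 j else x1.

Lemma row_head_cons x1 y : row_head (row_cons x1 y) = x1.
Proof. by rewrite /row_head mxE unlift_none. Qed.

Lemma row_tail_cons x1 y : row_tail (row_cons x1 y) = y.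
Proof. by apply/rowP => j; rewrite !mxE liftK. Qed.

Lemma box_head_tail (a b x : V) : box a b x <->
  row_head a <= row_head x <= row_head b /\ box (row_tail a) (row_tail b) (row_tail x).
Proof.
split=> [bx|[bx0 bx1] i]; first by split=> [|j]; rewrite ?mxE; exact: bx.
by have [j ->|->] := unliftP ord0 i; last exact: bx0; have := bx1 j; rewrite !mxE.
Qed.

Lemma boxvol_head_tail (a b : V) :
  boxvol a b = Num.max 0 (row_head b - row_head a) * boxvol (row_tail a) (row_tail b).
Proof.
by rewrite /boxvol big_ord_recl; congr (_ * _); apply: eq_bigr => j _; rewrite !mxE.
Qed.

Lemma indic_box_head_tail (a b x : V) :
  \1_(box a b) x = \1_(`[row_head a, row_head b]%classic) (row_head x) *
                   \1_(box (row_tail a) (row_tail b)) (row_tail x) :> R.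
Proof.
rewrite !indicE; have [bx|nbx] := pselect (box a b x).
  have [bx0 bx1] := (box_head_tail a b x).1 bx.
  by rewrite (mem_set bx) (mem_set bx1) (@mem_set _ `[_, _]%classic) ?mulr1.
rewrite (memNset nbx); have [bx1|] := pselect (box (row_tail a) (row_tail b) (row_tail x)).
  rewrite (@memNset _ `[_, _]%classic) ?mul0r //= in_itv => bx0.
  by apply: nbx; apply/box_head_tail.
by move=> nbx1; rewrite (memNset nbx1) mulr0.
Qed.

End HeadTail.

Lemma boxvol_ge0 {R : realType} {n : nat} (a b : 'rV[R]_n) : 0 <= boxvol a b.
Proof. by apply: prodr_ge0 => i _; rewrite le_max lexx. Qed.

(* The weights w make the statement strong enough for induction on the dimension:
   integrating out the first coordinate turns box volumes into weights. *)
Lemma box_cover_le {R : realType} {n : nat} (a b : nat -> 'rV[R]_n) (w : nat -> R)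
    (p q : 'rV[R]_n) (m : R) :
  (forall k, 0 <= w k) -> 0 <= m -> (forall i, p ord0 i <= q ord0 i) ->
  (forall x, box p q x -> (m%:E <= \sum_(k <oo) (w k * \1_(box (a k) (b k)) x)%:E)%E) ->
  ((m * boxvol p q)%:E <= \sum_(k <oo) (w k * boxvol (a k) (b k))%:E)%E.
Proof.
elim: n a b w p q m => [|n IH] a b w p q m w0 m0 pq cover.
  have box0 (u v x : 'rV[R]_0) : box u v x by case.
  have vol0 (u v : 'rV[R]_0) : boxvol u v = 1 by rewrite /boxvol big_ord0.
  rewrite vol0 mulr1; apply: le_trans (cover p (box0 _ _ _)) _.
  by apply: lee_nneseries => k _; rewrite ?vol0 indicE mem_set // lee_fin mulr_ge0.
pose wtail k := w k * boxvol (row_tail (a k)) (row_tail (b k)).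
pose mtail := m * boxvol (row_tail p) (row_tail q).
have slice x1 : row_head p <= x1 <= row_head q -> (mtail%:E <=
    \sum_(k <oo) (wtail k * \1_(`[row_head (a k), row_head (b k)]%classic) x1)%:E)%E.
  move=> px1q.
  have := IH (row_tail \o a) (row_tail \o b)
    (fun k => w k * \1_(`[row_head (a k), row_head (b k)]%classic) x1)
    (row_tail p) (row_tail q) m.
  rewrite (eq_eseriesr (fun k _ => congr1 EFin (mulrAC _ _ _))); apply => //.
  - by move=> k; rewrite mulr_ge0 // indicE.
  - by move=> j; have := pq (lift ord0 j); rewrite !mxE.
  move=> y py; apply: le_trans (cover (row_cons x1 y) _) _.
    by apply/box_head_tail; rewrite row_head_cons row_tail_cons.
  apply: lee_nneseries => k _; first by rewrite lee_fin mulr_ge0 // indicE.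
  by rewrite indic_box_head_tail row_head_cons row_tail_cons mulrA.
rewrite boxvol_head_tail (max_idPr _) ?subr_ge0 ?pq // mulrCA mulrC.
apply: le_trans (interval_cover_le (pq ord0) (mulr_ge0 m0 (boxvol_ge0 _ _))
  (fun k => mulr_ge0 (w0 k) (boxvol_ge0 _ _)) slice) _.
apply: lee_nneseries => k _.
  by rewrite lee_fin !mulr_ge0 ?boxvol_ge0 // le_max lexx.
by rewrite /wtail boxvol_head_tail -mulrA [boxvol _ _ * _]mulrC.
Qed.

Section OuterMeasure.
Context {R : realType} {n : nat}.
Local Notation V := 'rV[R]_n.
Local Open Scope ereal_scope.

Lemma lebo_ge0 (A : set V) : 0 <= lebo A.
Proof.
apply: le_ereal_inf_tmp => _ [a [b [_ ->]]].
by apply: nneseries_ge0 => k _ _; rewrite lee_fin boxvol_ge0.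
Qed.

Lemma le_lebo {A B : set V} : A `<=` B -> lebo A <= lebo B.
Proof.
move=> AB; apply: ereal_inf_le_tmp => _ [a [b [cover ->]]].
by exists a, b; split => //; exact: subset_trans cover.
Qed.

Lemma boxvol_le_lebo {p q : V} : (forall i, p ord0 i <= q ord0 i)%R ->
  (boxvol p q)%:E <= lebo (box p q).
Proof.
move=> pq; apply: le_ereal_inf_tmp => _ [a [b [cover ->]]].
have := box_cover_le a b (fun=> 1%R) p q 1%R (fun=> ler01) ler01 pq.
rewrite mul1r (eq_eseriesr (fun k _ => congr1 EFin (mul1r _))); apply => x /cover [k _ bx].
rewrite (@nneseriesD1 _ _ k) //= ?indicE ?mem_set // ?mulr1 ?leeDl //.
  by apply: nneseries_ge0 => j _ _; rewrite lee_fin mul1r indicE.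
Qed.

Lemma nneseries_interleave_le (f g : nat -> \bar R) :
  (forall k, 0 <= f k) -> (forall k, 0 <= g k) ->
  \sum_(k <oo) (if odd k then g k./2 else f k./2) <= \sum_(k <oo) f k + \sum_(k <oo) g k.
Proof.
move=> f0 g0; pose c k := if odd k then g k./2 else f k./2.
have c0 k : 0 <= c k by rewrite /c; case: odd.
change (\sum_(k <oo) c k <= \sum_(k <oo) f k + \sum_(k <oo) g k).
rewrite -(nneseriesD (fun k _ _ => f0 k) (fun k _ _ => g0 k)).
apply: lime_le; first exact: is_cvg_nneseries.
apply: nearW => N; apply: (@le_trans _ _ (\sum_(0 <= k < N.*2) c k)).
  rewrite -addnn [X in _ <= X](@big_cat_nat _ _ _ N) ?leq_addr //=.
  by apply: leeDl; exact: sume_ge0.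
have pair_sum m : \sum_(0 <= k < m.*2) c k = \sum_(0 <= k < m) (f k + g k).
  elim: m => [|m IH]; first by rewrite !big_geq.
  rewrite doubleS !big_nat_recr //= IH -addeA /c /= odd_double /=.
  by rewrite doubleK uphalf_double.
by rewrite pair_sum; apply: nneseries_lim_ge => k _ _; rewrite adde_ge0.
Qed.

Lemma lebo_setU (A B : set V) : lebo (A `|` B) <= lebo A + lebo B.
Proof.
have [fA|] := boolP (lebo A \is a fin_num); last first.
  rewrite ge0_fin_numE ?lebo_ge0 // -leNgt leye_eq => /eqP ->.
  by rewrite addye ?leey // gt_eqF // (lt_le_trans _ (lebo_ge0 B)) ?ltNy0.
have [fB|] := boolP (lebo B \is a fin_num); last first.
  rewrite ge0_fin_numE ?lebo_ge0 // -leNgt leye_eq => /eqP ->.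
  by rewrite addey ?leey // gt_eqF // (lt_le_trans _ (lebo_ge0 A)) ?ltNy0.
apply/lee_addgt0Pr => e e0.
have e2 : (0 < e / 2)%R by rewrite divr_gt0.
have [_ [aA [bA [coverA ->]]] ltA] := lb_ereal_inf_adherent e2 fA.
have [_ [aB [bB [coverB ->]]] ltB] := lb_ereal_inf_adherent e2 fB.
pose a k := if odd k then aB k./2 else aA k./2.
pose b k := if odd k then bB k./2 else bA k./2.
apply: (@le_trans _ _ (\sum_(k <oo) (boxvol (a k) (b k))%:E)).
  apply: ereal_inf_lbound; exists a, b; split => //.
  move=> x [/coverA [k _ bx]|/coverB [k _ bx]].
    by exists k.*2 => //; rewrite /a /b odd_double doubleK.
  by exists k.*2.+1 => //; rewrite /a /b /= odd_double /= uphalf_double.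
rewrite (@eq_eseriesr _ _ (fun k => if odd k then (boxvol (aB k./2) (bB k./2))%:E
    else (boxvol (aA k./2) (bA k./2))%:E)); last by move=> k _; rewrite /a /b; case: odd.
have vol0 (a' b' : nat -> V) k : 0 <= (boxvol (a' k) (b' k))%:E :> \bar R.
  by rewrite lee_fin boxvol_ge0.
apply: le_trans (nneseries_interleave_le _ _ (vol0 aA bA) (vol0 aB bB)) _.
apply: (@le_trans _ _ ((lebo A + (e / 2)%:E) + (lebo B + (e / 2)%:E))).
  by apply: leeD; exact: ltW.
by rewrite -(fineK fA) -(fineK fB) -!EFinD lee_fin; lra.
Qed.

Lemma symdiff_subU (X Y Z : set V) : symdiff X Z `<=` symdiff Y X `|` symdiff Y Z.
Proof.
move=> x; rewrite /symdiff /=; have [y|ny] := pselect (Y x).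
  by case=> -[]; [right; left|left; left].
by case=> -[]; [left; right|right; right].
Qed.

Lemma lebo_symdiff_triangle (X Y Z : set V) :
  lebo (symdiff X Z) <= lebo (symdiff Y X) + lebo (symdiff Y Z).
Proof. exact: le_trans (le_lebo (symdiff_subU X Y Z)) (lebo_setU _ _). Qed.

Lemma null_equiv_sym {X Y : set V} : null_equiv X Y -> null_equiv Y X.
Proof. by rewrite /null_equiv /symdiff setUC. Qed.

Lemma null_equiv_trans {X Y Z : set V} : null_equiv X Y -> null_equiv Y Z -> null_equiv X Z.
Proof.
move=> XY YZ; apply/eqP; rewrite eq_le lebo_ge0 andbT.
by have := lebo_symdiff_triangle X Y Z; rewrite (null_equiv_sym XY) YZ adde0.
Qed.

End OuterMeasure.

Section Geometry.
Context {R : realType} {n : nat}.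
Local Notation V := 'rV[R]_n.

Lemma dotvC (x y : V) : dotv x y = dotv y x.
Proof. by apply: eq_bigr => i _; rewrite mulrC. Qed.

Lemma dotvDl (x y z : V) : dotv (x + y) z = dotv x z + dotv y z.
Proof. by rewrite /dotv -big_split; apply: eq_bigr => i _; rewrite !mxE mulrDl. Qed.

Lemma dotvZl a (x y : V) : dotv (a *: x) y = a * dotv x y.
Proof. by rewrite /dotv mulr_sumr; apply: eq_bigr => i _; rewrite !mxE mulrA. Qed.

Lemma dotvNl (x y : V) : dotv (- x) y = - dotv x y.
Proof. by rewrite -scaleN1r dotvZl mulN1r. Qed.

Lemma dotvDr (x y z : V) : dotv z (x + y) = dotv z x + dotv z y.
Proof. by rewrite dotvC dotvDl !(dotvC z). Qed.

Lemma dotvZr a (x y : V) : dotv y (a *: x) = a * dotv y x.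
Proof. by rewrite dotvC dotvZl dotvC. Qed.

Lemma dotvNr (x y : V) : dotv y (- x) = - dotv y x.
Proof. by rewrite dotvC dotvNl dotvC. Qed.

Lemma dotvv_ge0 (x : V) : 0 <= dotv x x.
Proof. by apply: sumr_ge0 => i _; rewrite -expr2 sqr_ge0. Qed.

Definition dotvE := (dotvDl, dotvDr, dotvZl, dotvZr, dotvNl, dotvNr).

Lemma sqr_dotv_unit_le (w u : V) : dotv u u = 1 -> dotv w u ^+ 2 <= dotv w w.
Proof.
by move=> uu; have := dotvv_ge0 (w - dotv w u *: u); rewrite !dotvE uu (dotvC u w); nra.
Qed.

Lemma reflptK (H : ohyp R n) : is_ohyp H -> involutive (reflpt H).
Proof. by move=> hu x; rewrite /reflpt !dotvE hu; apply/rowP => i; rewrite !mxE; ring. Qed.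

Lemma reflsetK (H : ohyp R n) : is_ohyp H -> involutive (reflset H).
Proof. by move=> hH A; apply/seteqP; split => x; rewrite /reflset /= reflptK. Qed.

Lemma dotv_reflpt_sub (H : ohyp R n) (x : V) : is_ohyp H ->
  dotv (x - reflpt H x) H.1 = 2 * (dotv x H.1 - H.2).
Proof. by move=> hu; rewrite /reflpt !dotvE hu; ring. Qed.

Lemma reflpt_isometry (H : ohyp R n) (x y : V) : is_ohyp H ->
  dotv (reflpt H x - reflpt H y) (reflpt H x - reflpt H y) = dotv (x - y) (x - y).
Proof.
move=> hu; have -> : reflpt H x - reflpt H y = (x - y) - (2 * dotv (x - y) H.1) *: H.1.
  by rewrite /reflpt !dotvE; apply/rowP => i; rewrite !mxE; ring.
by rewrite !dotvE hu !(dotvC H.1); ring.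
Qed.

Lemma reflset_cball (H : ohyp R n) (x : V) r : is_ohyp H ->
  reflset H (cball x r) = cball (reflpt H x) r.
Proof.
move=> hH; apply/seteqP; split => z; rewrite /reflset /cball /=;
  by rewrite -(reflpt_isometry _ _ _ hH) reflptK.
Qed.

Lemma polarize_reflset (H : ohyp R n) (A : set V) : is_ohyp H ->
  polarize H (reflset H A) = polarize H A.
Proof. by move=> hH; rewrite /polarize reflsetK // (setUC A) (setIC A). Qed.

End Geometry.

Section SmallCube.
Context {R : realType} {n : nat}.
Local Notation V := 'rV[R]_n.
Local Notation side := ((n.+1)%:R^-1 : R).

Definition small_cube (c : V) : set V := box (c - const_mx side) (c + const_mx side).

Let side_gt0 : 0 < side. Proof. by rewrite invr_gt0 ltr0n. Qed.

Lemma small_cube_dist (c y : V) : small_cube c y -> dotv (y - c) (y - c) <= 1.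
Proof.
move=> cy.
have nside_le1 : n%:R * side ^+ 2 <= 1.
  have : n%:R * side <= 1 by rewrite ler_pdivrMr ?ltr0n // mul1r ler_nat.
  have : side <= 1 by rewrite invr_le1 ?ler1n ?unitfE ?pnatr_eq0.
  have : 0 <= n%:R :> R by [].
  by move: side_gt0; generalize side (n%:R : R) => s m; nra.
apply: le_trans nside_le1.
have -> : n%:R * side ^+ 2 = \sum_(i < n) side ^+ 2 by rewrite sumr_const card_ord mulr_natl.
apply: ler_sum => i _; rewrite !mxE; have := cy i; rewrite !mxE => /andP[lo hi].
by move: side_gt0 lo hi; generalize side => s; nra.
Qed.

Lemma small_cube_sub_cball (c : V) : small_cube c `<=` cball c 1.
Proof. by move=> y /small_cube_dist; rewrite /cball /= expr1n. Qed.

Lemma lebo_small_cube_gt0 (c : V) : (0 < lebo (small_cube c))%E.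
Proof.
rewrite /small_cube; have cpq i : (c - const_mx side) ord0 i <= (c + const_mx side) ord0 i.
  by rewrite !mxE; move: side_gt0; generalize side => s; lra.
apply: lt_le_trans (boxvol_le_lebo cpq); rewrite lte_fin.
apply: prodr_gt0 => i _; rewrite !mxE lt_max; apply/orP; right.
by move: side_gt0; generalize side => s; lra.
Qed.

Lemma not_null_equiv_small_cube (c : V) (X Y : set V) :
  small_cube c `<=` X -> (forall y, small_cube c y -> ~ Y y) -> ~ null_equiv X Y.
Proof.
move=> cX cY XY; have := lebo_small_cube_gt0 c.
have : (lebo (small_cube c) <= lebo (symdiff X Y))%E.
  by apply: le_lebo => y cy; left; split; [exact: cX|exact: cY].
by rewrite XY => /le_lt_trans/[apply]; rewrite ltxx.
Qed.

Lemma small_cube_dotv_le {c y u : V} : dotv u u = 1 ->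
  small_cube c y -> dotv (y - c) u ^+ 2 <= 1.
Proof. by move=> uu /small_cube_dist; exact/le_trans/sqr_dotv_unit_le. Qed.

Lemma cball_dotv_le {c y u : V} {r : R} : dotv u u = 1 ->
  cball c r y -> dotv (y - c) u ^+ 2 <= r ^+ 2.
Proof. by move=> uu; exact/le_trans/sqr_dotv_unit_le. Qed.

Lemma small_cube_cball_disjoint {u c c' y : V} : dotv u u = 1 ->
  9 <= dotv (c - c') u ^+ 2 -> small_cube c y -> ~ cball c' 1 y.
Proof.
move=> uu far /(small_cube_dotv_le uu) yc /(cball_dotv_le uu); rewrite expr1n.
have -> : dotv (y - c') u = dotv (y - c) u + dotv (c - c') u by rewrite !dotvE; ring.
by have := sqr_ge0 (2 * dotv (y - c) u + dotv (c - c') u); nra.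
Qed.

Lemma far_cballs_not_null_equiv (u c c' : V) : dotv u u = 1 ->
  9 <= dotv (c - c') u ^+ 2 -> ~ null_equiv (cball c 1) (cball c' 1).
Proof.
move=> uu far; apply: (not_null_equiv_small_cube c); first exact: small_cube_sub_cball.
by move=> y; exact: small_cube_cball_disjoint uu far.
Qed.

End SmallCube.

Section Solynin.
Context {R : realType} {n : nat}.
Local Notation V := 'rV[R]_n.

(* Every admissible radius r satisfies 2 r = |[t - r, t + r]| <= |slice| <= 2 rho. *)
Lemma solynin_radius_le (H0 : ohyp R n) (A : set V) (w : V) (a rho : R) : 0 <= rho ->
  line_slice H0 A w `<=` `[a - rho, a + rho]%classic -> solynin_radius H0 A w <= rho.
Proof.
move=> rho0 slice_sub; rewrite /solynin_radius; set S := [set r | _].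
have [[r Sr]|S0] := pselect (S !=set0); last first.
  by rewrite (_ : S = set0) ?inf0 //; apply/seteqP; split => // r Sr; apply: S0; exists r.
apply: le_trans (ge_inf _ Sr) _; first by exists 0 => ? [].
case: Sr => r0 Sr.
have : (lebesgue_measure (`[(H0.2 - r)%R, (H0.2 + r)%R]%classic : set R) <=
        lebesgue_measure (`[(a - rho)%R, (a + rho)%R]%classic : set R))%E.
  apply: le_trans _ (le_lebesgue_measure slice_sub); rewrite -Sr.
  by apply: le_lebesgue_measure => s rs; left.
by rewrite !lebesgue_measure_itv_cc lee_fin !(max_idPr _) ?subr_ge0; lra.
Qed.

Lemma solynin_cball {H0 : ohyp R n} {c z : V} {r : R} : is_ohyp H0 -> 0 <= r ->
  solynin H0 (cball c r) z -> H0.2 - r <= dotv z H0.1 <= H0.2 + r \/ cball c r z.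
Proof.
move=> hu r0; rewrite /solynin /=; set w := z - _ *: H0.1.
have : solynin_radius H0 (cball c r) w <= r.
  apply: (solynin_radius_le _ _ _ (dotv c H0.1 - dotv w H0.1) _ r0) => s /= slice_s.
  have := cball_dotv_le hu slice_s; rewrite /= in_itv /= !dotvE hu; nra.
move=> rad_le [/andP[lo hi]|[_ czr]]; [left; apply/andP; split; lra|by right].
Qed.

End Solynin.

Section Approximation.
Context {R : realType} {n : nat}.
Local Notation V := 'rV[R]_n.
Variable E : set (set V).
Hypothesis Eball : forall (x : V) (r : R), 0 < r -> E (cball x r).

Lemma seq_approx_reflset_cball (dm : set V -> set V) : seq_approx E dm ->
  exists H : ohyp R n, is_ohyp H /\ forall (x : V) (r : R), 0 < r ->
    null_equiv (dm (cball x r)) (dm (reflset H (cball x r))).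
Proof.
move=> [hs [hs_unit cvg_dm]]; exists (hs 0%N); split => // x r r0.
set B := cball x r; set B' := reflset (hs 0%N) B.
have EB' : E B' by rewrite /B' reflset_cball //; exact: Eball.
(* P_H B' = P_H B for the first hyperplane H, so all later iterates agree. *)
have polB' k : polcomp hs k.+1 B' = polcomp hs k.+1 B.
  by elim: k => [|k /= ->] /=; first exact: polarize_reflset.
have cvgB := cvg_dm _ (Eball x r r0); have cvgB' := cvg_dm _ EB'.
rewrite -cvg_shiftS in cvgB; rewrite -cvg_shiftS in cvgB'.
have cvg_sum : (fun k => L1dist (polcomp hs k.+1 B) (dm B) +
    L1dist (polcomp hs k.+1 B') (dm B'))%E @ \oo --> 0%E.
  by rewrite -[0%E]adde0; apply: cvgeD.
apply/eqP; rewrite eq_le lebo_ge0 andbT; apply: (cvge_to_ge cvg_sum).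
by apply: nearW => k; rewrite polB'; exact: lebo_symdiff_triangle.
Qed.

Lemma translate_cball (v x : V) (r : R) : translate v (cball x r) = cball (x + v) r.
Proof.
have shift z : z - v - x = z - (x + v) by rewrite opprD addrA addrAC.
by apply/seteqP; split => z; rewrite /translate /cball /= shift.
Qed.

Lemma not_seq_approx_translate (v : V) : ~ seq_approx E (translate v).
Proof.
move=> /seq_approx_reflset_cball [H [hH sym]].
pose x := (H.2 + 2) *: H.1.
have := sym x 1 ltr01; rewrite reflset_cball // !translate_cball.
apply: (far_cballs_not_null_equiv H.1) => //.
rewrite (_ : x + v - _ = x - reflpt H x) ?dotv_reflpt_sub // /x; last first.
  by rewrite opprD addrACA subrr addr0.
by rewrite !dotvE hH; nra.
Qed.

(* With x at height 2/b above the reflecting hyperplane H, the Brock images of the ball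
   at x and of its reflection have centres 4 (1 + (b - 1) p^2) / b >= 4 apart along H,
   where p is the cosine of the angle between the normals of H and H0. *)
Lemma not_seq_approx_brock (b : R) (H0 : ohyp R n) (dm : set V -> set V) :
  is_ohyp H0 -> 0 < b <= 1 -> brock_map b H0 dm -> ~ seq_approx E dm.
Proof.
move=> hH0 /andP[b_gt0 b_le1] brock /seq_approx_reflset_cball [H [hH sym]].
pose x := (H.2 + 2 / b) *: H.1.
have := sym x 1 ltr01; rewrite reflset_cball // => sym_x.
have := null_equiv_trans (null_equiv_trans (null_equiv_sym (brock x 1 ltr01)) sym_x)
  (brock (reflpt H x) 1 ltr01).
apply: (far_cballs_not_null_equiv H.1) => //.
set p := dotv H.1 H0.1.
have p2_le1 : p ^+ 2 <= 1 by rewrite -hH sqr_dotv_unit_le.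
rewrite /reflpt /x !dotvE hH (dotvC H0.1) -/p.
set d := (X in _ <= X ^+ 2).
have -> : d = 4 / b * (1 + (b - 1) * p ^+ 2) by rewrite /d; ring.
have : 4 <= 4 / b * (1 + (b - 1) * p ^+ 2).
  have b_le : b <= 1 + (b - 1) * p ^+ 2 by nra.
  apply: le_trans (ler_wpM2l _ b_le); first by rewrite divfK ?gt_eqF.
  by rewrite divr_ge0 // ltW.
by move: (4 / b * _) => y; nra.
Qed.

Lemma exists_above_and_off_hyperplane (u u0 : V) (t t' : R) :
  dotv u u = 1 -> dotv u0 u0 = 1 ->
  exists c : V, t + 3 <= dotv c u0 /\ 9 <= (2 * (dotv c u - t')) ^+ 2.
Proof.
move=> hu hu0; set p := dotv u u0.
have p2_le1 : p ^+ 2 <= 1 by rewrite -hu sqr_dotv_unit_le.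
have [far|near] := lerP 4 (((t + 7) * p - t') ^+ 2).
  by exists ((t + 7) *: u0); rewrite !dotvE hu0 (dotvC u0) -/p; split; nra.
have : -2 < (t + 7) * p - t' by nra.
by exists ((t + 7) *: u0 + 4 *: u); rewrite !dotvE hu hu0 (dotvC u0) -/p; split; nra.
Qed.

(* A small cube around a point c high above H0 lies in the Solynin image of the ball
   at c, but misses that of the reflected ball, which sits in a slab around H0 and in
   the reflected ball itself. *)
Lemma not_seq_approx_solynin (H0 : ohyp R n) : is_ohyp H0 -> ~ seq_approx E (solynin H0).
Proof.
move=> hH0 /seq_approx_reflset_cball [H [hH sym]].
have [c [above off]] := exists_above_and_off_hyperplane H.1 H0.1 H0.2 H.2 hH hH0.
have := sym c 1 ltr01; rewrite reflset_cball //.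
have cube_above y : small_cube c y -> H0.2 + 1 < dotv y H0.1.
  by move=> /(small_cube_dotv_le hH0); rewrite !dotvE; nra.
apply: (not_null_equiv_small_cube c) => y cy.
  right; split; last exact: small_cube_sub_cball.
  by have := cube_above y cy; lra.
case/(solynin_cball hH0 ler01) => [/andP[_ below]|].
  by have := cube_above y cy; lra.
by apply: (small_cube_cball_disjoint hH _ cy); rewrite dotv_reflpt_sub.
Qed.

End Approximation.

Theorem lemma5p3 (R : realType) (n : nat) (E : set (set 'rV[R]_n)) :
  (forall A, E A -> Ln A) ->
  (forall (x : 'rV[R]_n) (r : R), 0 < r -> E (cball x r)) ->
  (forall dm : set 'rV[R]_n -> set 'rV[R]_n,
     (forall A, E A -> Ln (dm A)) ->
     seq_approx E dm ->
     exists H : ohyp R n, is_ohyp H /\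
       forall (x : 'rV[R]_n) (r : R), 0 < r ->
         null_equiv (dm (cball x r)) (dm (reflset H (cball x r))))
  /\ (forall v : 'rV[R]_n, ~ seq_approx E (translate v))
  /\ (forall (b : R) (H0 : ohyp R n) (dm : set 'rV[R]_n -> set 'rV[R]_n),
        is_ohyp H0 -> 0 < b <= 1 ->
        (forall A, E A -> Ln (dm A)) -> brock_map b H0 dm ->
        ~ seq_approx E dm)
  /\ (forall H0 : ohyp R n, is_ohyp H0 -> ~ seq_approx E (solynin H0)).
Proof.
move=> _ Eball; split; first by move=> dm _; exact: seq_approx_reflset_cball.
split; first exact: not_seq_approx_translate.
split; first by move=> b H0 dm hH0 b01 _; exact: not_seq_approx_brock.
exact: not_seq_approx_solynin.
Qed.
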